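(* For every instance with $n=2$ agents (arbitrary budgets, costs and additive valuations), there exists a budget-feasible allocation that is EFx (with respect to budgets) and $\sqrt{1/2}$-efficient.
   Context: Setting: goods $M$ with costs $c(g)\ge0$, agents $i$ with budgets $B_i\ge 0$ and additive nonnegative valuations $v_i$, $c(S)=\sum_{g\in S}c(g)$. An allocation $\mathbf X=(X_1,\dots,X_n)$ is a tuple of pairwise disjoint subsets of $M$ (not all goods need be allocated); it is budget-feasible if $c(X_i)\le B_i$ for all $i$. $\mathbf X$ is EFx (with respect to budgets) if for all agents $i\ne j$, every $S\subseteq X_j$ with $c(S)\le B_i$ and every $g\in S$, $v_i(X_i)\ge v_i(S\setminus\{g\})$. $\mathrm{NSW}(\mathbf X)=(\prod_i v_i(X_i))^{1/n}$, and a budget-feasible $\mathbf X$ is $\rho$-efficient if $\mathrm{NSW}(\mathbf X)\ge\rho\cdot\max\{\mathrm{NSW}(\mathbf Y):\mathbf Y\text{ budget-feasible}\}$. *)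

From mathcomp Require Import all_boot all_order all_algebra.
Set Implicit Arguments. Unset Strict Implicit. Unset Printing Implicit Defensive.
Import Order.TTheory GRing.Theory Num.Theory.
Local Open Scope ring_scope.

Section Budget.
Variables (R : rcfType) (M : finType) (n : nat).

Definition setval (f : M -> R) (S : {set M}) : R := \sum_(g in S) f g.

Definition is_allocation (X : 'I_n -> {set M}) : Prop :=
  forall i j : 'I_n, i != j -> [disjoint X i & X j].

Definition budget_feasible (c : M -> R) (B : 'I_n -> R) (X : 'I_n -> {set M}) :=
  is_allocation X /\ forall i, setval c (X i) <= B i.

Definition EFx (c : M -> R) (B : 'I_n -> R) (v : 'I_n -> M -> R)
    (X : 'I_n -> {set M}) : Prop :=
  forall i j : 'I_n, i != j ->
  forall S : {set M}, S \subset X j -> setval c S <= B i ->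
  forall g, g \in S -> setval (v i) (S :\ g) <= setval (v i) (X i).

(* product of utilities; NSW = (this)^(1/n) *)
Definition NSWprod (v : 'I_n -> M -> R) (X : 'I_n -> {set M}) : R :=
  \prod_(i < n) setval (v i) (X i).
End Budget.

Definition NSW2 (R : rcfType) (M : finType) (v : 'I_2 -> M -> R)
    (X : 'I_2 -> {set M}) : R := Num.sqrt (NSWprod v X).

(* rho-efficiency: NSW(X) >= rho * NSW(Y) for every budget-feasible Y
   (equivalently >= rho * max, the max being over a finite nonempty set). *)
Definition rho_efficient2 (R : rcfType) (M : finType) (c : M -> R)
    (B : 'I_2 -> R) (v : 'I_2 -> M -> R) (rho : R) (X : 'I_2 -> {set M}) :=
  budget_feasible c B X /\
  forall Y, budget_feasible c B Y -> rho * NSW2 v Y <= NSW2 v X.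

From mathcomp Require Import all_boot all_order all_algebra.
From mathcomp Require Import lra.
Set Implicit Arguments. Unset Strict Implicit. Unset Printing Implicit Defensive.
Import Order.TTheory GRing.Theory Num.Theory.
Local Open Scope ring_scope.

(* For a valuation w, a cost c and a budget b, let bestval T be the largest
   value w(S) over affordable subsets S of T.  Start from a budget-feasible
   allocation Y of maximal Nash product.  If no agent i prefers its best
   affordable part of Y j to Y i, then Y itself is EFx.  Otherwise agent i
   "cuts": it picks a partition (P, ~P) of all goods maximising
   min(bestval P, bestval ~P), breaking ties by maximising the size of the
   strictly weaker side.  Such a cut is EFx from i's point of view: if a good
   could be removed from an affordable part of ~P to beat bestval P, moving
   that good to P would improve the tie-breaker.  Agent j "chooses" the side
   that is better for it and keeps its best affordable subset; i does the same
   with the other side.  Agent i loses nothing compared to Y (its envy makes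
   Y i a witness for the cut value), and agent j keeps at least half of its
   value, so Nash(Y) <= 2 Nash(X), which gives sqrt(1/2)-efficiency. *)

Section SetValue.
Variables (R : rcfType) (M : finType).

Lemma setval_ge0 (f : M -> R) (S : {set M}) :
  (forall x, 0 <= f x) -> 0 <= setval f S.
Proof. by move=> f_ge0; apply: sumr_ge0. Qed.

Lemma setval_split (f : M -> R) (S P : {set M}) :
  setval f S = setval f (S :&: P) + setval f (S :\: P).
Proof. by rewrite /setval (big_setID P). Qed.

Lemma setval_sub (f : M -> R) (S T : {set M}) : (forall x, 0 <= f x) ->
  S \subset T -> setval f S <= setval f T.
Proof.
move=> f_ge0 sST; rewrite (setval_split f T S) (setIidPr sST).
by rewrite lerDl setval_ge0.
Qed.

End SetValue.

Section BestBundle.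
Variables (R : rcfType) (M : finType) (c w : M -> R) (b : R).
Hypotheses (c_ge0 : forall g, 0 <= c g) (b_ge0 : 0 <= b).

Local Notation C S := (setval c S).
Local Notation W S := (setval w S).

Definition best (T : {set M}) : {set M} :=
  [arg max_(S > set0 | (S \subset T) && (C S <= b)) W S]%O.

Definition bestval (T : {set M}) : R := W (best T).

Lemma bestP (T : {set M}) : best T \subset T /\ C (best T) <= b /\
  forall S : {set M}, S \subset T -> C S <= b -> W S <= bestval T.
Proof.
rewrite /bestval /best; case: arg_maxP.
  by rewrite sub0set /setval big_set0.
move=> A /andP[sAT cA] A_max; do 2!split=> //.
by move=> S sST cS; apply: A_max; rewrite sST cS.
Qed.

Lemma bestval_ge (S T : {set M}) : S \subset T -> C S <= b -> W S <= bestval T.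
Proof. by have [_ [_ best_max]] := bestP T; apply: best_max. Qed.

Lemma bestval_mono (T T' : {set M}) : T \subset T' -> bestval T <= bestval T'.
Proof.
move=> sTT'; have [sbT [cb _]] := bestP T.
by apply: bestval_ge => //; apply: subset_trans sTT'.
Qed.

(* An affordable bundle is worth at most the two best parts of a partition;
   this is the source of the factor 2 for the choosing agent. *)
Lemma bestval_split (Y P : {set M}) : C Y <= b ->
  W Y <= bestval P + bestval (~: P).
Proof.
move=> cY; rewrite (setval_split _ Y P).
have cost_sub (S : {set M}) : S \subset Y -> C S <= b.
  by move=> sSY; apply: le_trans cY; apply: setval_sub.
apply: lerD; apply: bestval_ge; rewrite ?cost_sub ?subsetIl ?subsetDl //.
  exact: subsetIr.
by rewrite setDE subsetIr.
Qed.

Definition cut_value (P : {set M}) : R := Num.min (bestval P) (bestval (~: P)).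

Definition weak_side_size (P : {set M}) : nat :=
  if bestval P < bestval (~: P) then #|P|
  else if bestval (~: P) < bestval P then #|~: P| else 0.

Definition optimal_cut (P : {set M}) : Prop :=
  (forall P', cut_value P' <= cut_value P) /\
  (forall P', cut_value P' = cut_value P ->
     (weak_side_size P' <= weak_side_size P)%N).

Lemma optimal_cutC (P : {set M}) : optimal_cut P -> optimal_cut (~: P).
Proof.
have cut_valueC Q : cut_value (~: Q) = cut_value Q.
  by rewrite /cut_value setCK minC.
have weak_sizeC Q : weak_side_size (~: Q) = weak_side_size Q.
  by rewrite /weak_side_size setCK; case: ltgtP.
move=> [val_max size_max]; split=> P'; rewrite cut_valueC ?weak_sizeC //.
exact: size_max.
Qed.

Lemma optimal_cut_exists : exists P, optimal_cut P.
Proof.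
pose P0 := [arg max_(P > set0) cut_value P]%O.
have P0_max P' : cut_value P' <= cut_value P0.
  by rewrite /P0; case: arg_maxP => // A _; apply.
exists [arg max_(P > P0 | cut_value P == cut_value P0) weak_side_size P]%O.
case: arg_maxP => // A /eqP valA size_max; split=> P'; first by rewrite valA.
by move=> eqP'; apply: size_max; rewrite eqP' valA.
Qed.

Lemma optimal_cut_EFx (P : {set M}) : optimal_cut P ->
  forall S : {set M}, S \subset ~: P -> C S <= b ->
  forall g, g \in S -> W (S :\ g) <= bestval P.
Proof.
move=> [val_max size_max] S sSP cS g Sg; rewrite leNgt; apply/negP => lt_Sg.
have gNP : g \notin P by move/subsetP: sSP => /(_ g Sg); rewrite inE.
have cSg : C (S :\ g) <= b.
  by apply: le_trans cS; apply: setval_sub => //; apply: subsetDl.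
set P' := g |: P.
have grow_P : bestval P <= bestval P' by apply/bestval_mono/subsetUr.
have small_P' : bestval P < bestval (~: P').
  apply: (lt_le_trans lt_Sg); apply: bestval_ge => //; apply/subsetP => x.
  rewrite !inE => /andP[xg Sx]; rewrite negb_or xg /=.
  by move/subsetP: sSP => /(_ x Sx); rewrite inE.
have small_P : bestval P < bestval (~: P).
  apply: (lt_le_trans lt_Sg); apply: bestval_ge => //.
  exact: subset_trans (subsetDl S [set g]) sSP.
have valP : cut_value P = bestval P by rewrite /cut_value min_l // ltW.
have same_P' : bestval P' = bestval P.
  apply/eqP; rewrite eq_le grow_P andbT.
  have := val_max P'; rewrite valP /cut_value ge_min => /orP[//|].
  by rewrite leNgt small_P'.
have val_eq : cut_value P' = cut_value P.
  by rewrite valP /cut_value same_P' min_l // ltW.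
have := size_max P' val_eq; rewrite /weak_side_size same_P' small_P small_P'.
by rewrite /P' cardsU1 gNP add1n ltnn.
Qed.

End BestBundle.

Lemma I2_other (i j k : 'I_2) : i != j -> k = i \/ k = j.
Proof.
by case: i j k => [[|[|?]] ?] [[|[|?]] ?] [[|[|?]] ?] //= _;
  [left|right|right|left]; apply/val_inj.
Qed.

Lemma I2_pairs (i j k l : 'I_2) : i != j -> k != l ->
  (k = i /\ l = j) \/ (k = j /\ l = i).
Proof.
move=> ij; have [] := I2_other k ij => ->; have [] := I2_other l ij => ->;
rewrite ?eqxx // => _; by [left|right].
Qed.

Lemma prod_I2 (R : comPzRingType) (i j : 'I_2) (F : 'I_2 -> R) : i != j ->
  \prod_(k < 2) F k = F i * F j.
Proof.
have w0 : widen_ord (leqnSn 1) ord0 = ord0 :> 'I_2 by apply/val_inj.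
have h01 : ord0 != ord_max :> 'I_2 by [].
rewrite big_ord_recr big_ord1 /= w0.
have [] := I2_other i h01 => ->; have [] := I2_other j h01 => -> // _.
exact: mulrC.
Qed.

Lemma nsw_optimum_exists (R : rcfType) (M : finType) (n : nat) (c : M -> R)
    (B : 'I_n -> R) (v : 'I_n -> M -> R) : (forall i, 0 <= B i) ->
  exists2 Y, budget_feasible c B Y &
    forall Z, budget_feasible c B Z -> NSWprod v Z <= NSWprod v Y.
Proof.
move=> B_ge0.
pose feasb (F : {ffun 'I_n -> {set M}}) :=
  [forall k, forall l, (k != l) ==> [disjoint F k & F l]] &&
  [forall k, setval c (F k) <= B k].
have feasbP (Z : 'I_n -> {set M}) :
    budget_feasible c B Z -> feasb [ffun k => Z k].
  move=> [disZ costZ]; apply/andP; split; apply/forallP => k; rewrite ?ffunE //.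
  by apply/forallP => l; apply/implyP; rewrite !ffunE; apply: disZ.
have empty_feasible : feasb [ffun _ => set0].
  apply: feasbP; split=> [k l _|k] /=; first by rewrite -setI_eq0 set0I.
  by rewrite /setval big_set0.
have [F /andP[/forallP disF /forallP costF] F_max] :=
  arg_maxP (fun F : {ffun 'I_n -> {set M}} => NSWprod v F) empty_feasible.
exists F.
  split=> [k l kl|k]; last exact: costF.
  by move/forallP: (disF k) => /(_ l); rewrite kl.
move=> Z /feasbP/F_max; congr (_ <= _).
by apply: eq_bigr => k _; rewrite ffunE.
Qed.

Lemma half_product_efficient (R : rcfType) (M : finType) (c : M -> R)
    (B : 'I_2 -> R) (v : 'I_2 -> M -> R) (X : 'I_2 -> {set M}) :
  budget_feasible c B X ->
  (forall Z, budget_feasible c B Z -> NSWprod v Z <= 2%:R * NSWprod v X) ->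
  rho_efficient2 c B v (Num.sqrt (2%:R^-1)) X.
Proof.
move=> feasX X_half; split=> // Z feasZ.
rewrite /NSW2 -sqrtrM ?invr_ge0 // ler_wsqrtr //.
by rewrite ler_pdivrMl // X_half.
Qed.

Section TwoAgents.
Variables (R : rcfType) (M : finType) (c : M -> R) (B : 'I_2 -> R)
    (v : 'I_2 -> M -> R).
Hypotheses (c_ge0 : forall g, 0 <= c g) (B_ge0 : forall i, 0 <= B i)
  (v_ge0 : forall i g, 0 <= v i g).

Local Notation V k S := (setval (v k) S).
Local Notation C S := (setval c S).
Local Notation best_value k T := (bestval c (v k) (B k) T).

Lemma NSWprod_ge0 (X : 'I_2 -> {set M}) : 0 <= NSWprod v X.
Proof. by apply: prodr_ge0 => k _; apply: setval_ge0. Qed.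

Lemma no_envy_EFx (Y : 'I_2 -> {set M}) :
  (forall k l, k != l -> best_value k (Y l) <= V k (Y k)) -> EFx c B v Y.
Proof.
move=> no_envy k l kl S sSY cS g Sg; apply: le_trans (no_envy k l kl).
have sub_Sg : S :\ g \subset S by apply: subsetDl.
apply: (bestval_ge _ (B_ge0 k)); first exact: subset_trans sub_Sg sSY.
by apply: le_trans cS; apply: setval_sub.
Qed.

Section CutAndChoose.
Variables (i j : 'I_2) (O : {set M}).
Hypotheses (ij : i != j) (O_opt : optimal_cut c (v i) (B i) O)
  (j_prefers : best_value j O <= best_value j (~: O)).

Definition cut_choose_alloc (k : 'I_2) : {set M} :=
  if k == i then best c (v i) (B i) O else best c (v j) (B j) (~: O).

Lemma cut_choose_i : cut_choose_alloc i = best c (v i) (B i) O.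
Proof. by rewrite /cut_choose_alloc eqxx. Qed.

Lemma cut_choose_j : cut_choose_alloc j = best c (v j) (B j) (~: O).
Proof. by rewrite /cut_choose_alloc eq_sym (negbTE ij). Qed.

Lemma cut_choose_feasible : budget_feasible c B cut_choose_alloc.
Proof.
have [sAO [cA _]] := bestP c (v i) (B_ge0 i) O.
have [sBO [cB _]] := bestP c (v j) (B_ge0 j) (~: O).
have disAB : [disjoint best c (v i) (B i) O & best c (v j) (B j) (~: O)].
  by apply: (disjointW sAO sBO); rewrite -setI_eq0 setICr.
split=> [k l kl|k].
  by have [[-> ->]|[-> ->]] := I2_pairs ij kl;
    rewrite cut_choose_i cut_choose_j // disjoint_sym.
by have [->|->] := I2_other k ij; rewrite ?cut_choose_i ?cut_choose_j.
Qed.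

Lemma cut_choose_EFx : EFx c B v cut_choose_alloc.
Proof.
have [sAO _] := bestP c (v i) (B_ge0 i) O.
have [sBO _] := bestP c (v j) (B_ge0 j) (~: O).
move=> k l kl; have [[-> ->]|[-> ->]] := I2_pairs ij kl;
rewrite cut_choose_i cut_choose_j => S sS cS g Sg.
  apply: (optimal_cut_EFx c_ge0 (B_ge0 i) O_opt) => //.
  exact: subset_trans sBO.
apply: le_trans j_prefers; apply: le_trans (_ : V j S <= _).
  by apply: setval_sub => //; apply: subsetDl.
by apply: (bestval_ge _ (B_ge0 j)) => //; apply: subset_trans sAO.
Qed.

Lemma cut_choose_value_i (Y : 'I_2 -> {set M}) : budget_feasible c B Y ->
  V i (Y i) < best_value i (Y j) -> V i (Y i) <= V i (cut_choose_alloc i).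
Proof.
move=> [disY costY] envy; rewrite cut_choose_i.
have sYj : Y j \subset ~: Y i.
  by rewrite subsets_disjoint setCK disjoint_sym; apply: disY.
have Yi_le_cut : V i (Y i) <= cut_value c (v i) (B i) (Y i).
  rewrite /cut_value le_min bestval_ge //=.
  by apply/ltW/(lt_le_trans envy)/bestval_mono.
apply: (le_trans Yi_le_cut); apply: (le_trans (proj1 O_opt (Y i))).
by rewrite /cut_value ge_min lexx.
Qed.

Lemma cut_choose_value_j (Y : {set M}) : C Y <= B j ->
  V j Y <= 2%:R * V j (cut_choose_alloc j).
Proof.
move=> cY; rewrite cut_choose_j.
apply: (le_trans (bestval_split _ c_ge0 (B_ge0 j) O cY)).
by move: j_prefers; rewrite /bestval; lra.
Qed.

End CutAndChoose.

Lemma cut_and_choose (i j : 'I_2) (Y : 'I_2 -> {set M}) : i != j ->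
  budget_feasible c B Y -> V i (Y i) < best_value i (Y j) ->
  exists X, [/\ budget_feasible c B X, EFx c B v X &
    NSWprod v Y <= 2%:R * NSWprod v X].
Proof.
move=> ij feasY envy.
have [O O_opt j_prefers] : exists2 O, optimal_cut c (v i) (B i) O &
    best_value j O <= best_value j (~: O).
  have [P P_opt] := optimal_cut_exists c (v i) (B i).
  have [le_PC|lt_CP] := leP (best_value j P) (best_value j (~: P)).
    by exists P.
  by exists (~: P); [apply: optimal_cutC | rewrite setCK ltW].
exists (cut_choose_alloc i j O); split.
- exact: cut_choose_feasible.
- exact: cut_choose_EFx.
have value_i := cut_choose_value_i ij O_opt feasY envy.
have value_j := cut_choose_value_j ij j_prefers (proj2 feasY j).
rewrite /NSWprod !(prod_I2 _ ij).
have := setval_ge0 (Y i) (v_ge0 i); have := setval_ge0 (Y j) (v_ge0 j).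
have := setval_ge0 (cut_choose_alloc i j O i) (v_ge0 i).
have := setval_ge0 (cut_choose_alloc i j O j) (v_ge0 j).
nra.
Qed.

Lemma EFx_half_product (Y : 'I_2 -> {set M}) : budget_feasible c B Y ->
  exists X, [/\ budget_feasible c B X, EFx c B v X &
    NSWprod v Y <= 2%:R * NSWprod v X].
Proof.
move=> feasY; have h01 : (ord0 : 'I_2) != ord_max by [].
have h10 : (ord_max : 'I_2) != ord0 by [].
have [env0|no_env0] := ltP (V ord0 (Y ord0)) (best_value ord0 (Y ord_max)).
  exact: cut_and_choose h01 feasY env0.
have [env1|no_env1] :=
  ltP (V ord_max (Y ord_max)) (best_value ord_max (Y ord0)).
  exact: cut_and_choose h10 feasY env1.
exists Y; split=> //.
  by apply: no_envy_EFx => k l kl; have [[-> ->]|[-> ->]] := I2_pairs h01 kl.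
by have := NSWprod_ge0 Y; lra.
Qed.

End TwoAgents.

Theorem mainTheorem4 (R : rcfType) (M : finType) (c : M -> R) (B : 'I_2 -> R)
    (v : 'I_2 -> M -> R) :
  (forall g, 0 <= c g) -> (forall i, 0 <= B i) -> (forall i g, 0 <= v i g) ->
  exists X : 'I_2 -> {set M},
    budget_feasible c B X /\ EFx c B v X /\
    rho_efficient2 c B v (Num.sqrt (2%:R^-1)) X.
Proof.
move=> c_ge0 B_ge0 v_ge0.
have [Y feasY Y_opt] := @nsw_optimum_exists R M 2 c B v B_ge0.
have [X [feasX EFxX Y_le_X]] := EFx_half_product c_ge0 B_ge0 v_ge0 feasY.
exists X; do 2!split=> //; apply: half_product_efficient => // Z feasZ.
exact: le_trans (Y_opt Z feasZ) Y_le_X.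
Qed.
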